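(* In the setting below, for each $n\in\mathbb{N}_0$ and $i,j=1,\dots,N$, $$|x_i(s)-x_j(t)|\le d(t_{2n})\quad\forall s,t\in[t_{2n},t_{2n+1}].$$
   Context: Setting: $N\ge2$; $\psi:\mathbb{R}^d\times\mathbb{R}^d\to\mathbb{R}$ positive, bounded, continuous, $K:=\|\psi\|_\infty$; $\{t_n\}_{n\in\mathbb{N}_0}$ increasing, nonnegative, $t_0=0$, $t_n\to\infty$; $\alpha(0)=1$, $\alpha=1$ on $(t_{2n},t_{2n+1})$, $\alpha=-1$ on $[t_{2n+1},t_{2n+2}]$; $\{x_i\}$ solves $x_i'(t)=\frac1{N-1}\sum_{j\ne i}\alpha(t)\psi(x_i(t),x_j(t))(x_j(t)-x_i(t))$, $t>0$, $x_i(0)=x_i^0\in\mathbb{R}^d$ (continuous, $C^1$ on each $(t_n,t_{n+1})$). $d(t):=\max_{i,j}|x_i(t)-x_j(t)|$. Standing assumptions: $t_{2n+2}-t_{2n+1}<\frac{\ln 2}{K}$ for all $n$; $\sum_{p\ge0}\ln\frac{e^{K(t_{2p+2}-t_{2p+1})}}{2-e^{K(t_{2p+2}-t_{2p+1})}}<\infty$; $\sum_{p\ge0}\ln\max\{1-e^{-K(t_{2p+1}-t_{2p})},1-\frac{\psi_0}{K}(1-e^{-K(t_{2p+1}-t_{2p})})\}=-\infty$, with $\psi_0=\min_{|y|,|z|\le M^0}\psi(y,z)$, $M^0=e^{K\sum_{p}(t_{2p+2}-t_{2p+1})}\max_i|x_i^0|$. *)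

From HB Require Import structures.
From mathcomp Require Import all_boot all_order all_algebra.
From mathcomp Require Import all_classical all_reals all_analysis.
Set Implicit Arguments. Unset Strict Implicit. Unset Printing Implicit Defensive.
Import Order.TTheory GRing.Theory Num.Theory.
Import numFieldNormedType.Exports.
Local Open Scope classical_set_scope.
Local Open Scope ring_scope.

Definition enorm (R : realType) (d : nat) (v : 'rV[R]_d) : R :=
  Num.sqrt (\sum_(k < d) (v ord0 k) ^+ 2).

(* K := ||psi||_oo (psi is positive, so this is the sup of its values) *)
Definition Ksup (R : realType) (d : nat) (psi : 'rV[R]_d -> 'rV[R]_d -> R) : R :=
  sup [set r | exists y z, r = psi y z].

Definition alpha (R : realType) (t : nat -> R) (s : R) : R :=
  if s == 0 then 1
  else if `[< exists n, t (2 * n + 1)%N <= s <= t (2 * n + 2)%N >] then -1 else 1.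

Definition diam (R : realType) (d N : nat) (x : 'I_N -> R -> 'rV[R]_d) (s : R) : R :=
  \big[Num.max/0]_(i < N) \big[Num.max/0]_(j < N) enorm (x i s - x j s).

Definition negdur (R : realType) (t : nat -> R) (p : nat) : R :=
  t (2 * p + 2)%N - t (2 * p + 1)%N.
Definition posdur (R : realType) (t : nat -> R) (p : nat) : R :=
  t (2 * p + 1)%N - t (2 * p)%N.

Definition M0 (R : realType) (d N : nat) (K : R) (t : nat -> R)
    (x : 'I_N -> R -> 'rV[R]_d) : R :=
  expR (K * fine (\sum_(0 <= p <oo) (negdur t p)%:E)%E)
  * \big[Num.max/0]_(i < N) enorm (x i 0).

Definition psi0 (R : realType) (d : nat) (psi : 'rV[R]_d -> 'rV[R]_d -> R) (M : R) : R :=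
  inf [set r | exists y z, enorm y <= M /\ enorm z <= M /\ r = psi y z].

Definition rhs (R : realType) (d N : nat) (psi : 'rV[R]_d -> 'rV[R]_d -> R)
    (t : nat -> R) (x : 'I_N -> R -> 'rV[R]_d) (i : 'I_N) (s : R) : 'rV[R]_d :=
  (N.-1%:R)^-1 *: \sum_(j < N | j != i)
      (alpha t s * psi (x i s) (x j s)) *: (x j s - x i s).

From HB Require Import structures.
From mathcomp Require Import all_boot all_order all_algebra.
From mathcomp Require Import all_classical all_reals all_analysis.
From mathcomp Require Import lra zify.
Import Order.TTheory GRing.Theory Num.Theory.
Import numFieldNormedType.Exports.
Local Open Scope classical_set_scope.
Local Open Scope ring_scope.

(* While alpha = 1 every velocity x_k' is a nonnegative combination of the
   vectors x_j - x_k, so for any direction w the largest projection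
   max_k <w, x_k> is nonincreasing on [t_{2n}, t_{2n+1}] (a maximum principle,
   proved through the upper left Dini derivative of that maximum).  Taking
   w = v and w = -v for v = x_i(s) - x_j(u) gives
   |v|^2 = <v, x_i(s) - x_j(u)> <= <v, x_p(t_{2n}) - x_q(t_{2n})>
   for some p, q, whence |v| <= |x_p(t_{2n}) - x_q(t_{2n})| <= d(t_{2n}). *)

(* limsup_{r -> c-} (g c - g r) / (c - r) <= 0 *)
Definition left_dini_le0 {R : realType} (g : R -> R) (c : R) : Prop :=
  forall e : R, 0 < e -> \forall r \near c^'-, g c <= g r + e * (c - r).

Lemma is_derive_left_dini_le0 {R : realType} {g : R -> R} {c D : R} :
  is_derive c 1 g D -> D <= 0 -> left_dini_le0 g c.
Proof.
move=> gD D_le0 e e_gt0.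
have : (fun h => h^-1 *: (g (h *: 1 + c) - g c)) @ 0^' --> D.
  by rewrite -(@derive_val _ _ _ _ _ _ _ gD); exact: ex_derive.
move=> /cvgrPdist_lt /(_ e e_gt0); rewrite !near_withinE => near_D.
apply: (nbhs0P _ c).2; apply: filterS near_D => h qh h_lt0.
have {h_lt0} h_lt0 : h < 0 by lra.
move: qh; rewrite [h%:A]mulr1 [h + c]addrC (lt_eqF h_lt0) => /(_ isT).
rewrite ltr_distlC => /andP[_]; set q := _ *: _ => q_lt.
have dq : g (c + h) - g c = h * q.
  by rewrite /q /GRing.scale /= mulrA mulfV ?lt_eqF ?mul1r.
nra.
Qed.

Lemma left_dini_le0_of_below {R : realType} (f g : R -> R) (c : R) :
  (forall r, f r <= g r) -> f c = g c -> left_dini_le0 f c -> left_dini_le0 g c.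
Proof.
move=> le_fg fg_c f_dini e e_gt0; apply: filterS (f_dini e e_gt0) => r.
by rewrite -fg_c => /le_trans; apply; rewrite lerD2r.
Qed.

Lemma left_dini_le0_le_start {R : realType} (g : R -> R) (a b : R) :
  {within `[a, b], continuous g} ->
  (forall c, a < c < b -> left_dini_le0 g c) ->
  forall s, a <= s <= b -> g s <= g a.
Proof.
move=> g_cont g_dini.
have le_start s : a < s < b -> g s <= g a.
  move=> /andP[a_lt_s s_lt_b]; apply/ler_addgt0Pr => e e_gt0.
  pose k := e / (s - a); have k_gt0 : 0 < k by rewrite divr_gt0 ?subr_gt0.
  pose z r := g r - k * r.
  have z_cont : {within `[a, s], continuous z}.
    apply: (continuous_subspaceW (B := `[a, b])).
      by apply: subset_itvl; rewrite bnd_simp ltW.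
    move=> r; apply: continuousB; first exact: g_cont.
    exact/continuous_subspaceT/mulrl_continuous.
  have [c c_in c_max] := EVT_max (ltW a_lt_s) z_cont.
  move: c_in; rewrite in_itv /= le_eqVlt => /andP[/predU1P[a_eq_c|a_lt_c] c_le_s].
    have := c_max s; rewrite -a_eq_c in_itv /= (ltW a_lt_s) lexx /z => /(_ isT).
    have -> : e = k * (s - a) by rewrite /k mulfVK // subr_eq0 gt_eqF.
    rewrite mulrBr; lra.
  (* an interior maximum of z contradicts the Dini bound with slope k / 2 *)
  have k2_gt0 : 0 < k / 2 by rewrite divr_gt0.
  near c^'- => r.
  have r_lt_c : r < c by near: r; exact: nbhs_left_lt.
  have a_lt_r : a < r by near: r; exact: nbhs_left_gt.
  have := c_max r; rewrite in_itv /= (ltW a_lt_r) (ltW (lt_le_trans r_lt_c c_le_s)).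
  have : g c <= g r + k / 2 * (c - r).
    near: r; apply: g_dini k2_gt0.
    by rewrite a_lt_c (le_lt_trans c_le_s s_lt_b).
  rewrite /z; nra.
move=> s; rewrite le_eqVlt => /andP[/predU1P[<- //|a_lt_s]].
rewrite le_eqVlt => /predU1P[s_eq_b|s_lt_b]; last by apply: le_start; rewrite a_lt_s.
rewrite s_eq_b in a_lt_s *.
have [_ _ g_left] := (continuous_within_itvP _ a_lt_s).1 g_cont.
apply: cvgr_to_le g_left _; near=> r; apply: le_start.
by apply/andP; split; near: r; [exact: nbhs_left_gt | exact: nbhs_left_lt].
Unshelve. all: by end_near. Qed.

Lemma finite_max_principle {R : realType} {I : finType} (i0 : I)
    (y : I -> R -> R) (a b : R) :
  (forall k, {within `[a, b], continuous (y k)}) ->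
  (forall k c, a < c < b -> (forall j, y j c <= y k c) -> left_dini_le0 (y k) c) ->
  forall k s, a <= s <= b -> exists p, y k s <= y p a.
Proof.
move=> y_cont y_dini k s s_in.
pose ymax r := \big[Num.max/y i0 r]_j y j r.
have le_ymax j r : y j r <= ymax r by exact: le_bigmax.
have ymax_attained r : exists p, ymax r = y p r.
  rewrite /ymax; elim/big_ind: _ => [|_ _ [p ->] [q ->]|j _]; try by eexists.
  by case: (leP (y p r) (y q r)) => _; eexists.
have ymax_cont : {within `[a, b], continuous ymax}.
  rewrite /ymax; elim: (index_enum I) => [|j js IH].
    by rewrite (_ : (fun r => _) = y i0) //; apply/funext => r; rewrite big_nil.
  rewrite (_ : (fun r => _) = y j \max (fun r => \big[Num.max/y i0 r]_(j <- js) y j r)).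
    by move=> r; apply: continuous_max; [exact: y_cont | exact: IH].
  by apply/funext => r; rewrite big_cons.
have [p ymax_p] := ymax_attained a; exists p.
rewrite -ymax_p (le_trans (le_ymax k s)) //.
apply: left_dini_le0_le_start ymax_cont _ s s_in => c c_in.
have [q ymax_q] := ymax_attained c.
apply: (@left_dini_le0_of_below _ (y q)) => //; apply: y_dini => // j.
by rewrite -ymax_q.
Qed.

Definition dotv {R : realType} {d : nat} (u v : 'rV[R]_d) : R :=
  \sum_(k < d) u ord0 k * v ord0 k.

Section dotv.
Context {R : realType} {d : nat}.
Implicit Types u v w : 'rV[R]_d.

Lemma dotvZ w (r : R) v : dotv w (r *: v) = r * dotv w v.
Proof. by rewrite /dotv mulr_sumr; apply: eq_bigr => k _; rewrite mxE mulrCA. Qed.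

Lemma dotvB w u v : dotv w (u - v) = dotv w u - dotv w v.
Proof. by rewrite /dotv -sumrB; apply: eq_bigr => k _; rewrite !mxE mulrBr. Qed.

Lemma dotv_sum w (I : finType) (P : pred I) (F : I -> 'rV[R]_d) :
  dotv w (\sum_(j | P j) F j) = \sum_(j | P j) dotv w (F j).
Proof.
by rewrite /dotv exchange_big /=; apply: eq_bigr => k _; rewrite summxE mulr_sumr.
Qed.

Lemma dotNv u v : dotv (- u) v = - dotv u v.
Proof. by rewrite /dotv -sumrN; apply: eq_bigr => k _; rewrite mxE mulNr. Qed.

Lemma dotvv v : dotv v v = enorm v ^+ 2.
Proof.
rewrite /enorm sqr_sqrtr; last by apply: sumr_ge0 => k _; exact: sqr_ge0.
by apply: eq_bigr => k _; rewrite expr2.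
Qed.

Lemma enorm_le_of_sqr_le_dotv u v : enorm u ^+ 2 <= dotv u v -> enorm u <= enorm v.
Proof.
have amgm : 2 * dotv u v <= enorm u ^+ 2 + enorm v ^+ 2.
  rewrite -!dotvv /dotv mulr_sumr -big_split /=; apply: ler_sum => k _.
  by have := sqr_ge0 (u ord0 k - v ord0 k); nra.
have u_ge0 : 0 <= enorm u := sqrtr_ge0 _.
have v_ge0 : 0 <= enorm v := sqrtr_ge0 _.
nra.
Qed.

Lemma continuous_dotv w : continuous (dotv w).
Proof.
apply: (@continuous_big _ _ _ _ _ add_continuous) => k _ v.
exact: (cvgM (cvg_cst _) (@coord_continuous R 1 d ord0 k v)).
Qed.

Lemma is_derive_dotv w {f : R -> 'rV[R]_d} {c : R} {D : 'rV[R]_d} :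
  is_derive c 1 f D -> is_derive c 1 (fun s => dotv w (f s)) (dotv w D).
Proof.
move=> fD.
have coordD k : is_derive c 1 (fun s => f s ord0 k) (D ord0 k).
  have f_der : derivable f c 1 := @ex_derive _ _ _ _ _ _ _ fD.
  apply: DeriveDef; first exact: (derivable_mxP f c 1).1 f_der ord0 k.
  by rewrite -(@derive_val _ _ _ _ _ _ _ fD) derive_mx // mxE.
rewrite (_ : (fun s => _) = \sum_(k < d) (w ord0 k \*: fun s => f s ord0 k)).
  exact: is_derive_sum.
by apply/funext => s; rewrite fct_sumE.
Qed.

End dotv.

Lemma enorm_le_diam {R : realType} {d N : nat} (x : 'I_N -> R -> 'rV[R]_d)
    (p q : 'I_N) (s : R) :
  enorm (x p s - x q s) <= diam x s.
Proof.
apply: le_trans (le_bigmax _ _ p).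
exact: (le_bigmax _ (fun q => enorm (x p s - x q s)) q).
Qed.

Lemma alpha_pos_phase {R : realType} {t : nat -> R} {n : nat} {s : R} :
  (forall m, t m < t m.+1) -> t (2 * n)%N < s < t (2 * n + 1)%N -> alpha t s = 1.
Proof.
move=> t_lt /andP[t2n_lt_s s_lt_t2n1]; rewrite /alpha; case: ifP => // _.
have t_le := (nondecreasing_seqP t).1 (fun m => ltW (t_lt m)).
rewrite asboolF // => -[m /andP[le1 le2]].
have [m_lt_n | n_le_m] := ltnP m n.
  have : t (2 * m + 2)%N <= t (2 * n)%N by apply: t_le; lia.
  lra.
have : t (2 * n + 1)%N <= t (2 * m + 1)%N by apply: t_le; lia.
lra.
Qed.

Lemma dotv_rhs_le0 {R : realType} {d N : nat} (psi : 'rV[R]_d -> 'rV[R]_d -> R)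
    (t : nat -> R) (x : 'I_N -> R -> 'rV[R]_d) (w : 'rV[R]_d) (k : 'I_N) (s : R) :
  (forall y z, 0 <= psi y z) -> 0 <= alpha t s ->
  (forall j, dotv w (x j s) <= dotv w (x k s)) ->
  dotv w (rhs psi t x k s) <= 0.
Proof.
move=> psi_ge0 alpha_ge0 k_top.
rewrite /rhs dotvZ dotv_sum mulr_ge0_le0 ?invr_ge0 //.
by apply: sumr_le0 => j _; rewrite dotvZ dotvB mulr_ge0_le0 ?mulr_ge0 ?subr_le0.
Qed.

Section positive_phase.
Context {R : realType} {d N : nat} {psi : 'rV[R]_d -> 'rV[R]_d -> R}.
Context {t : nat -> R} {x : 'I_N -> R -> 'rV[R]_d}.
Hypothesis psi_ge0 : forall y z, 0 <= psi y z.
Hypothesis t0 : t 0%N = 0.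
Hypothesis t_lt : forall n, t n < t n.+1.
Hypothesis x_cont : forall i, {within `[0, +oo[, continuous (x i)}.
Hypothesis x_der : forall i n s, t n < s < t n.+1 -> is_derive s 1 (x i) (rhs psi t x i s).

Lemma dotv_le_max_at_phase_start n w k s :
  t (2 * n)%N <= s <= t (2 * n + 1)%N ->
  exists p, dotv w (x k s) <= dotv w (x p (t (2 * n)%N)).
Proof.
apply: (finite_max_principle k (fun j r => dotv w (x j r))) => [j | j c c_in j_top].
  have t2n_ge0 : 0 <= t (2 * n)%N.
    by rewrite -t0; apply: (nondecreasing_seqP t).1 => // m; exact/ltW.
  have xj_cont : {within `[t (2 * n)%N, t (2 * n + 1)%N], continuous (x j)}.
    apply: continuous_subspaceW (x_cont j) => r /=.
    by rewrite !in_itv /= andbT => /andP[+ _]; exact: le_trans.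
  by move=> r; apply: continuous_comp; [exact: xj_cont | exact: continuous_dotv].
have xj_der : is_derive c 1 (x j) (rhs psi t x j c) by apply: x_der; rewrite -addn1; exact: c_in.
apply: (is_derive_left_dini_le0 (is_derive_dotv w xj_der)).
by apply: dotv_rhs_le0 => //; rewrite (alpha_pos_phase t_lt c_in).
Qed.

End positive_phase.

Theorem lemma3p2 (R : realType) (d N : nat)
  (psi : 'rV[R]_d -> 'rV[R]_d -> R) (t : nat -> R)
  (x : 'I_N -> R -> 'rV[R]_d) :
  (2 <= N)%N ->
  (* psi positive, bounded, continuous *)
  (forall y z, 0 < psi y z) ->
  (exists B : R, forall y z, psi y z <= B) ->
  continuous (fun p : 'rV[R]_d * 'rV[R]_d => psi p.1 p.2) ->
  (* time sequence *)
  t 0%N = 0 ->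
  (forall n, t n < t n.+1) ->
  t n @[n --> \oo] --> +oo ->
  (* x solves the system: continuous on [0,oo), differentiable on each (t_n, t_{n+1}) *)
  (forall i, {within `[0, +oo[, continuous (x i)}) ->
  (forall i n s, t n < s < t n.+1 -> is_derive s 1 (x i) (rhs psi t x i s)) ->
  (* standing assumptions *)
  (forall n, negdur t n < ln 2 / Ksup psi) ->
  (\sum_(0 <= p <oo)
     (ln (expR (Ksup psi * negdur t p) / (2 - expR (Ksup psi * negdur t p))))%:E
     < +oo)%E ->
  (\sum_(0 <= p <oo)
     (ln (Num.max (1 - expR (- (Ksup psi * posdur t p)))
                  (1 - psi0 psi (M0 (Ksup psi) t x) / Ksup psi
                         * (1 - expR (- (Ksup psi * posdur t p))))))%:E
     = -oo)%E ->
  forall (n : nat) (i j : 'I_N) (s u : R),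
    t (2 * n)%N <= s <= t (2 * n + 1)%N ->
    t (2 * n)%N <= u <= t (2 * n + 1)%N ->
    enorm (x i s - x j u) <= diam x (t (2 * n)%N).
Proof.
move=> _ psi_gt0 _ _ t0 t_lt _ x_cont x_der _ _ _ n i j s u s_in u_in.
have psi_ge0 y z : 0 <= psi y z by exact/ltW.
have dotv_le := dotv_le_max_at_phase_start psi_ge0 t0 t_lt x_cont x_der.
set v := x i s - x j u.
have [p le_p] := dotv_le n v i s s_in.
have [q le_q] := dotv_le n (- v) j u u_in.
rewrite !dotNv lerN2 in le_q.
apply: le_trans (enorm_le_diam x p q _).
apply: enorm_le_of_sqr_le_dotv.
by rewrite -dotvv {2}/v !dotvB lerB.
Qed.
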